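(* Let $G=(S,T,\pi)$ be a countable two-person win-lose game such that the family $\mathcal{B}^2_{\downarrow}(G)$ is ascending-union closed. Then for every $\mathbf{p}\in\Delta(S)$ the infimum $\inf_{\mathbf{q}\in\Delta(T)}\pi^{\mathrm{mix}}(\mathbf{p},\mathbf{q})$ is attained, the infimum $\inf_{\mathbf{q}\in\Delta(T)}\sup_{\mathbf{p}\in\Delta(S)}\pi^{\mathrm{mix}}(\mathbf{p},\mathbf{q})$ is attained, and $$\sup_{\mathbf{p}\in\Delta(S)}\min_{\mathbf{q}\in\Delta(T)}\pi^{\mathrm{mix}}(\mathbf{p},\mathbf{q})=\min_{\mathbf{q}\in\Delta(T)}\sup_{\mathbf{p}\in\Delta(S)}\pi^{\mathrm{mix}}(\mathbf{p},\mathbf{q}).$$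
   Context: A two-person win-lose game is a triple $G=(S,T,\pi)$ where $S,T$ are non-empty sets and $\pi:S\times T\to\{0,1\}$. It is countable if $|S|=|T|=\aleph_0$. For a set $X$, $\Delta(X)$ denotes the set of probability distributions on $X$ with at most countable support. For $\mathbf{p}\in\Delta(S)$, $\mathbf{q}\in\Delta(T)$, $\pi^{\mathrm{mix}}(\mathbf{p},\mathbf{q})=\sum_{s,t}p_sq_t\pi(s,t)$. For $t\in T$ let $B_t=\{s\in S:\pi(s,t)=0\}$, let $\mathcal{B}^2(G)=\{B_t:t\in T\}$, and $\mathcal{B}^2_{\downarrow}(G)=\{A\subseteq S:\exists t\in T,\ A\subseteq B_t\}$. A family $\mathcal{F}$ of sets is ascending-union closed if whenever $A_i\in\mathcal{F}$ for $i=1,2,\ldots$ and $A_1\subset A_2\subset\cdots$, then $\bigcup_{i=1}^\infty A_i\in\mathcal{F}$. *)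

From HB Require Import structures.
From mathcomp Require Import all_boot all_order all_algebra.
From mathcomp Require Import all_classical all_reals all_analysis.
Set Implicit Arguments. Unset Strict Implicit. Unset Printing Implicit Defensive.
Import Order.TTheory GRing.Theory Num.Theory.
Local Open Scope classical_set_scope.
Local Open Scope ring_scope.

(* A win-lose game (S,T,pi) with pi : S -> T -> bool (true = 1, false = 0). *)

(* countable = countably infinite: in bijection with nat *)
Definition countably_infinite (X : Type) : Prop :=
  exists f : nat -> X, bijective f.

(* Delta(X): probability distributions on X (countable support is automatic
   for nonnegative weights with total mass 1, summed via esum). *)
Definition is_dist (R : realType) (X : choiceType) (p : X -> R) : Prop :=
  (forall x, 0 <= p x) /\ (\esum_(x in [set: X]) (p x)%:E = 1)%E.

Definition Delta (R : realType) (X : choiceType) : set (X -> R) :=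
  [set p | is_dist p].

Definition pimix (R : realType) (S T : choiceType) (pi : S -> T -> bool)
  (p : S -> R) (q : T -> R) : \bar R :=
  \esum_(st in [set: S * T]) (p st.1 * q st.2 * (pi st.1 st.2)%:R)%:E.

Definition Bt (S T : Type) (pi : S -> T -> bool) (t : T) : set S :=
  [set s | pi s t = false].

Definition B2down (S T : Type) (pi : S -> T -> bool) : set (set S) :=
  [set A | exists t, A `<=` Bt pi t].

Definition ascending_union_closed (X : Type) (F : set (set X)) : Prop :=
  forall A : nat -> set X, (forall i, F (A i)) ->
    (forall i, A i `<` A i.+1) -> F (\bigcup_i A i).

(* For a mixed row strategy [p], the payoff of a column [t] is
   [c_p(t) = sum_s p_s pi(s,t)].  Given columns [t_n] with [c_p(t_n)] tending to
   the infimum, fix an ultrafilter on [nat]: the rows lost by [t_n] for almost all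
   [n] form an ascending union of finite sets, each contained in some [B_t], so by
   ascending-union closedness they are all lost by a single column [ts], which is
   a best response.

   Let [v] be the sup-min value.  The game restricted to the first [n] rows is
   finite (columns only matter through their win patterns on these rows), and by
   Farkas' lemma its column player can keep each of these rows at most [v].  An
   ultrafilter limit of such strategies is a finitely additive probability [mu]
   on columns with [mu(pi(s,.)) <= v] for every row [s].  Enumerate the columns as
   [g_0, g_1, ...] and push [mu] forward along the map sending [t] to the first
   [g_j] that is at least as good as [t] against the first [k] rows; the limits
   [r_j] of these weights as [k] grows still keep every row at most [v], and no
   mass escapes to infinity: columns escaping ever further would have a limit
   column, again by ascending-union closedness, and that column is some [g_j],
   which cannot escape beyond [j].  Then [r] is a column strategy attaining the
   min-sup, which therefore equals the sup-min. *)

From HB Require Import structures.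
From mathcomp Require Import all_boot all_order all_algebra.
From mathcomp Require Import all_classical all_reals all_analysis.
From mathcomp Require Import ring lra.
Import Order.TTheory GRing.Theory Num.Theory numFieldNormedType.Exports.

Set Implicit Arguments.
Unset Strict Implicit.
Unset Printing Implicit Defensive.

Local Open Scope classical_set_scope.
Local Open Scope ring_scope.

(** * Farkas' lemma and finite games *)

Section Farkas.
Variables (R : realFieldType) (I : finType).
Implicit Types (u x y : I -> R) (a : nat -> I -> R) (c : R).

Definition dotv u x := \sum_i u i * x i.

Lemma dotvBr u x y c : dotv u (fun i => y i - c * x i) = dotv u y - c * dotv u x.
Proof. by rewrite /dotv mulr_sumr -sumrB; apply: eq_bigr => i _; ring. Qed.

Lemma dotvBl u x y c : dotv (fun i => u i - c * x i) y = dotv u y - c * dotv x y.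
Proof. by rewrite /dotv mulr_sumr -sumrB; apply: eq_bigr => i _; ring. Qed.

Definition cone_mem n a b :=
  exists2 lam : nat -> R, forall k, 0 <= lam k & forall i, b i = \sum_(k < n) lam k * a k i.

Definition separates n a b x :=
  (forall k, (k < n)%N -> 0 <= dotv (a k) x) /\ dotv b x < 0.

Lemma farkas0 a b : cone_mem 0 a b \/ exists x, separates 0 a b x.
Proof.
have [b0|] := boolP [forall i, b i == 0].
  left; exists (fun=> 0) => // i; rewrite big_ord0.
  by move/forallP: b0 => /(_ i)/eqP.
rewrite negb_forall => /existsP[i0 bi0]; right; exists (fun i => - b i); split => //.
rewrite /dotv (eq_bigr _ (fun i _ => mulrN _ _)) sumrN oppr_lt0 (bigD1 i0) //= -expr2.
rewrite ltr_pwDl ?exprn_even_gt0 //.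
by apply: sumr_ge0 => i _; rewrite -expr2 sqr_ge0.
Qed.

(* Projecting all vectors along [a n] onto the hyperplane orthogonal to [x]
   eliminates [a n]; a certificate for the projected family lifts back. *)
Lemma farkas_project n a b x :
  separates n a b x -> dotv (a n) x < 0 ->
  (forall a' b', cone_mem n a' b' \/ exists y, separates n a' b' y) ->
  cone_mem n.+1 a b \/ exists z, separates n.+1 a b z.
Proof.
move=> [hx hbx] anx IH; set al := dotv (a n) x; have al0 : al != 0 by rewrite ltr0_neq0.
pose a' k i := a k i - dotv (a k) x / al * a n i.
pose b' i := b i - dotv b x / al * a n i.
have [[lam lam0 hb]|[y [hy hby]]] := IH a' b'.
  left; pose num := dotv b x - \sum_(k < n) lam k * dotv (a k) x.
  exists (fun k => if (k < n)%N then lam k else num / al).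
    move=> k; case: ifP => // _; rewrite ler_ndivlMr // mul0r subr_le0.
    by apply: le_trans (ltW hbx) _; apply: sumr_ge0 => k' _; rewrite mulr_ge0 ?hx.
  move=> i; rewrite big_ord_recr /= ltnn.
  under eq_bigr => k _ do rewrite ltn_ord.
  have E : \sum_(k < n) lam k * a' k i = \sum_(k < n) lam k * a k i
      - (\sum_(k < n) lam k * dotv (a k) x) / al * a n i.
    by rewrite !mulr_suml -sumrB; apply: eq_bigr => k _; rewrite /a'; ring.
  have := hb i; rewrite E /b' => hbi.
  have -> : num / al * a n i = dotv b x / al * a n i
      - (\sum_(k < n) lam k * dotv (a k) x) / al * a n i by rewrite /num; ring.
  lra.
have swap u : dotv (a n) y / al * dotv u x = dotv u x / al * dotv (a n) y by ring.
right; exists (fun i => y i - dotv (a n) y / al * x i); split.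
  move=> k; rewrite ltnS leq_eqVlt => /orP[/eqP->|kn].
    by rewrite dotvBr -/al divfK // subrr.
  by have := hy k kn; rewrite /a' dotvBl dotvBr swap.
by move: hby; rewrite /b' dotvBl dotvBr swap.
Qed.

Lemma farkas n a b : cone_mem n a b \/ exists x, separates n a b x.
Proof.
elim: n a b => [|n IH] a b; first exact: farkas0.
have [[lam lam0 hb]|[x hx]] := IH a b.
  left; exists (fun k => if k == n then 0 else lam k) => [k|i]; first by case: ifP.
  rewrite big_ord_recr /= eqxx mul0r addr0 hb.
  by apply: eq_bigr => k _; rewrite ltn_eqF.
have [anx|anx] := leP 0 (dotv (a n) x); last exact: farkas_project hx anx (IH).
right; exists x; case: hx => hx hbx; split => // k.
by rewrite ltnS leq_eqVlt => /orP[/eqP->|/hx].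
Qed.

End Farkas.

Section FiniteMinimax.
Variable R : realFieldType.

Definition mixed (I : finType) (p : I -> R) := (forall i, 0 <= p i) /\ \sum_i p i = 1.

Section GameEncoding.
Variables (m N : nat) (A : 'I_m -> 'I_N.+1 -> R) (c : R).

(* Farkas is applied in [R^(1+m)]: coordinate [ord0] carries the total mass and
   the others the rows; the vectors are the columns of [A] topped by [1], followed
   by the unit vectors of the rows. *)
Let col_vec (j : 'I_N.+1) (o : 'I_m.+1) := if unlift ord0 o is Some i then A i j else 1.

Let unit_vec (k : nat) (o : 'I_m.+1) : R :=
  if unlift ord0 o is Some i then ((i : nat) == k)%:R else 0.

Definition game_vec (k : nat) :=
  if (k < N.+1)%N then col_vec (inord k) else unit_vec (k - N.+1)%N.

Definition game_rhs (o : 'I_m.+1) := if unlift ord0 o is Some _ then c else 1.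

Let game_vec_col (j : 'I_N.+1) : game_vec j = col_vec j.
Proof. by rewrite /game_vec ltn_ord; congr col_vec; apply: val_inj; rewrite /= inordK. Qed.

Let game_vec_unit (i : 'I_m) : game_vec (N.+1 + i) = unit_vec i.
Proof. by rewrite /game_vec ltnNge leq_addr /= addKn. Qed.

Lemma cone_col_strategy : cone_mem (N.+1 + m) game_vec game_rhs ->
  exists2 q, mixed q & forall i, \sum_j A i j * q j <= c.
Proof.
move=> [lam lam0 hb].
have hb' o : game_rhs o = \sum_(j < N.+1) lam j * col_vec j o
    + \sum_(i < m) lam (N.+1 + i)%N * unit_vec i o.
  by rewrite hb big_split_ord /=; congr (_ + _); apply: eq_bigr => k _;
    rewrite ?game_vec_col ?game_vec_unit.
exists (fun j : 'I_N.+1 => lam j).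
  split=> [j|]; first exact: lam0.
  have := hb' ord0; rewrite /game_rhs /col_vec /unit_vec unlift_none [X in _ + X]big1 => [|k _].
    by rewrite addr0 => ->; apply: eq_bigr => j _; rewrite mulr1.
  exact: mulr0.
move=> i; have := hb' (lift ord0 i); rewrite /game_rhs /col_vec /unit_vec liftK => ->.
rewrite -[leLHS]addr0 lerD ?sumr_ge0 // => [|k _]; last by rewrite mulr_ge0.
by apply: ler_sum => j _; rewrite mulrC.
Qed.

Lemma separates_row_strategy x : separates (N.+1 + m) game_vec game_rhs x ->
  exists2 p, mixed p & forall j, c < \sum_i p i * A i j.
Proof.
move=> [hx hbx]; pose s := \sum_(i < m) x (lift ord0 i).
have x_ge0 (i : 'I_m) : 0 <= x (lift ord0 i).
  have := hx (N.+1 + i)%N; rewrite ltn_add2l ltn_ord game_vec_unit => /(_ isT).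
  rewrite /dotv big_ord_recl /unit_vec unlift_none mul0r add0r.
  under eq_bigr do rewrite liftK.
  rewrite (bigD1 i) //= eqxx mul1r big1 ?addr0 // => k ki.
  by move: ki; rewrite -(inj_eq val_inj) => /negPf ->; rewrite mul0r.
have col_ge0 (j : 'I_N.+1) : 0 <= x ord0 + \sum_(i < m) A i j * x (lift ord0 i).
  have := hx j (leq_trans (ltn_ord j) (leq_addr m N.+1)); rewrite game_vec_col.
  by rewrite /dotv big_ord_recl /col_vec unlift_none mul1r; under eq_bigr do rewrite liftK.
have rhs_lt0 : x ord0 + c * s < 0.
  move: hbx; rewrite /dotv big_ord_recl /game_rhs unlift_none mul1r /s mulr_sumr.
  by under eq_bigr do rewrite liftK.
have s_gt0 : 0 < s.
  rewrite lt_neqAle sumr_ge0 // andbT; apply/eqP => s0.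
  have := col_ge0 ord0; rewrite big1 ?addr0 => [|i _].
    by move: rhs_lt0; rewrite -s0 mulr0 addr0 => /lt_le_trans h /h; rewrite ltxx.
  by rewrite (psumr_eq0P (fun i _ => x_ge0 i) (esym s0)) // mulr0.
exists (fun i => x (lift ord0 i) / s).
  split=> [i|]; first exact: divr_ge0 (x_ge0 i) (ltW s_gt0).
  by rewrite -mulr_suml divff ?gt_eqF.
move=> j; have := col_ge0 j; rewrite -(ltr_pM2r s_gt0) mulr_suml => colj.
under eq_bigr do rewrite mulrAC divfK ?gt_eqF // mulrC.
lra.
Qed.

End GameEncoding.

Lemma minimax_alternative m N (A : 'I_m -> 'I_N -> R) c : (0 < N)%N ->
  (exists2 q, mixed q & forall i, \sum_j A i j * q j <= c) \/
  (exists2 p, mixed p & forall j, c < \sum_i p i * A i j).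
Proof.
case: N A => // N A _.
case: (farkas (N.+1 + m) (game_vec A) (game_rhs c)) => [/cone_col_strategy|[x]].
  by left.
by move=> /separates_row_strategy; right.
Qed.

End FiniteMinimax.

(** * Countable sums and mixed strategies *)

Section EsumExtra.
Variables (R : realType) (X : choiceType).
Local Open Scope ereal_scope.
Implicit Types (D : set X) (a : X -> \bar R).

Lemma ge0_esumZl D (x : R) a : (0 <= x)%R -> (forall t, 0 <= a t) ->
  \esum_(t in D) (x%:E * a t) = x%:E * \esum_(t in D) a t.
Proof.
move=> x0 a0; rewrite /esum -ereal_supZl //; last first.
  by apply/set0P; exists 0, set0; [exact: fsets_set0|rewrite fsbig_set0].
congr ereal_sup; apply/seteqP; split=> _ [A fA <-].
  exists (\sum_(i \in A) a i)%R; first by exists A.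
  by rewrite ge0_mule_fsumr.
by move: fA => [B fB <-]; exists B => //; rewrite ge0_mule_fsumr.
Qed.

Lemma esumT_single (x0 : X) a : (forall x, 0 <= a x) ->
  (forall x, x != x0 -> a x = 0) -> \esum_(x in [set: X]) a x = a x0.
Proof.
move=> a0 a_eq0; rewrite (esumID [set x0]) // setTI esum_set1 // esum1 ?adde0 //.
by move=> x [_ /eqP]; exact: a_eq0.
Qed.

End EsumExtra.

Section EsumNat.
Variable R : realType.
Local Open Scope ereal_scope.
Implicit Types a : nat -> \bar R.

Lemma lee_sum_esum_nat a N : (forall i, 0 <= a i) ->
  \sum_(i < N) a i <= \esum_(i in [set: nat]) a i.
Proof.
move=> a0; rewrite -nneseries_esumT //.
by have := @nneseries_lim_ge R a xpredT 0%N N (fun n _ _ => a0 n); rewrite big_mkord.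
Qed.

Lemma esum_nat_le a c : (forall i, 0 <= a i) ->
  (forall N, \sum_(i < N) a i <= c) -> \esum_(i in [set: nat]) a i <= c.
Proof.
move=> a0 ac; rewrite -nneseries_esumT //.
by apply: lime_le; [exact: is_cvg_nneseries|apply: nearW => N; rewrite big_mkord].
Qed.

Lemma esum_nat_fin a n : (forall i, 0 <= a i) -> (forall i, (n <= i)%N -> a i = 0) ->
  \esum_(i in [set: nat]) a i = \sum_(i < n) a i.
Proof.
move=> a0 an; apply/eqP; rewrite eq_le lee_sum_esum_nat // andbT.
apply: esum_nat_le => // N; have [Nn|nN] := leqP N n.
  exact: (@lee_sum_nneg_ord R a xpredT (fun n _ => a0 n) _ _ Nn).
rewrite -(subnKC (ltnW nN)); elim: (N - n)%N => [|d IH]; first by rewrite addn0.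
by rewrite addnS big_ord_recr /= an ?leq_addr // adde0.
Qed.

Lemma esum_reindex_nat (X : choiceType) (f : nat -> X) (a : X -> \bar R) :
  bijective f -> \esum_(x in [set: X]) a x = \esum_(i in [set: nat]) a (f i).
Proof. by move=> fbij; apply: reindex_esum; rewrite setTT_bijective. Qed.

End EsumNat.

Section Distributions.
Variables (R : realType) (X : choiceType).

Lemma Delta_ge0 (p : X -> R) : Delta p -> forall x, 0 <= p x.
Proof. by case. Qed.

Lemma Delta_esum (p : X -> R) : Delta p -> (\esum_(x in [set: X]) (p x)%:E = 1)%E.
Proof. by case. Qed.

Lemma Delta_enum (f : nat -> X) (fi : X -> nat) (r : nat -> R) :
  cancel f fi -> cancel fi f -> (forall j, 0 <= r j) ->
  (forall N, \sum_(j < N) r j <= 1) ->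
  (forall eps, 0 < eps -> exists N, 1 - eps < \sum_(j < N) r j) ->
  Delta (fun x => r (fi x)).
Proof.
move=> fK fiK r0 r1 r_cvg1; split=> //.
rewrite (@esum_reindex_nat _ _ f); last by exists fi.
under eq_esum do rewrite fK.
apply/le_anti/andP; split.
  by apply: esum_nat_le => [i|N]; rewrite ?lee_fin // sumEFin lee_fin.
apply/lee_addgt0Pr => eps eps_gt0; have [N hN] := r_cvg1 eps eps_gt0.
apply: (@le_trans _ _ ((\sum_(j < N) r j)%:E + eps%:E)%E); first by rewrite -EFinD lee_fin; lra.
by rewrite leeD2r // -sumEFin; apply: lee_sum_esum_nat => i; rewrite lee_fin.
Qed.

Definition pure (x0 : X) : X -> R := fun x => (x == x0)%:R.

Lemma Delta_pure x0 : Delta (pure x0).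
Proof.
split=> [x|]; first by rewrite /pure ler0n.
rewrite (esumT_single (x0:=x0)) => [|x|x /negPf]; rewrite /pure ?eqxx ?lee_fin ?ler0n //.
by move=> ->.
Qed.

End Distributions.

Section Payoffs.
Variables (R : realType) (S T : choiceType) (pi : S -> T -> bool).
Implicit Types (p : S -> R) (q : T -> R).

Definition col_payoff p t : \bar R := \esum_(s in [set: S]) (p s * (pi s t)%:R)%:E.
Definition row_payoff q s : \bar R := \esum_(t in [set: T]) (q t * (pi s t)%:R)%:E.

Definition guarantees p (m : R) := forall t, (m%:E <= col_payoff p t)%E.

Definition bounds_guarantees (v : R) :=
  forall p m, Delta p -> 0 <= m -> guarantees p m -> m <= v.

Lemma col_payoff_ge0 p t : Delta p -> (0 <= col_payoff p t)%E.
Proof. by move=> /Delta_ge0 p0; apply: esum_ge0 => s _; rewrite lee_fin mulr_ge0. Qed.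

Lemma col_payoff_le1 p t : Delta p -> (col_payoff p t <= 1)%E.
Proof.
move=> Dp; rewrite -(Delta_esum Dp); apply: le_esum => s _.
by rewrite lee_fin ler_piMr ?(Delta_ge0 Dp) // lern1 leq_b1.
Qed.

Lemma col_payoff_fin_num p t : Delta p -> col_payoff p t \is a fin_num.
Proof.
by move=> Dp; rewrite ge0_fin_numE ?col_payoff_ge0 // (le_lt_trans (col_payoff_le1 t Dp)) ?ltry.
Qed.

Lemma row_payoff_ge0 q s : Delta q -> (0 <= row_payoff q s)%E.
Proof. by move=> /Delta_ge0 q0; apply: esum_ge0 => t _; rewrite lee_fin mulr_ge0. Qed.

Lemma pimix_ge0 p q : Delta p -> Delta q -> (0 <= pimix pi p q)%E.
Proof.
move=> /Delta_ge0 p0 /Delta_ge0 q0; apply: esum_ge0 => -[s t] _.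
by rewrite lee_fin !mulr_ge0.
Qed.

Let setT_XT (A B : Type) : [set: A] `*`` (fun=> [set: B]) = [set: A * B].
Proof. by apply/seteqP; split => // -[a b]. Qed.

Lemma pimix_rowE p q : Delta p -> Delta q ->
  pimix pi p q = (\esum_(s in [set: S]) ((p s)%:E * row_payoff q s))%E.
Proof.
move=> /Delta_ge0 p0 /Delta_ge0 q0; rewrite /pimix -setT_XT.
rewrite -(esum_esum (a := fun s t => (p s * q t * (pi s t)%:R)%:E)); last first.
  by move=> s t _ _; rewrite lee_fin !mulr_ge0.
apply: eq_esum => s _; rewrite /row_payoff -ge0_esumZl // => [|t]; last first.
  by rewrite lee_fin mulr_ge0.
by apply: eq_esum => t _; rewrite -EFinM mulrA.
Qed.

Lemma pimix_colE p q : Delta p -> Delta q ->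
  pimix pi p q = (\esum_(t in [set: T]) ((q t)%:E * col_payoff p t))%E.
Proof.
move=> /Delta_ge0 p0 /Delta_ge0 q0; rewrite /pimix.
rewrite (@reindex_esum R (T * S)%type (S * T)%type setT setT (fun x => (x.2, x.1))); last first.
  by rewrite setTT_bijective; exists (fun x => (x.2, x.1)) => -[].
rewrite -setT_XT -(esum_esum (a := fun t s => (p s * q t * (pi s t)%:R)%:E)); last first.
  by move=> t s _ _; rewrite lee_fin !mulr_ge0.
apply: eq_esum => t _; rewrite /col_payoff -ge0_esumZl // => [|s]; last first.
  by rewrite lee_fin mulr_ge0.
by apply: eq_esum => s _ /=; rewrite -EFinM mulrCA mulrA.
Qed.

Lemma pimix_pure p t0 : Delta p -> pimix pi p (pure R t0) = col_payoff p t0.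
Proof.
move=> Dp; rewrite pimix_colE //; last exact: Delta_pure.
rewrite (@esumT_single R T t0) => [|t|t /negPf].
- by rewrite /pure eqxx mul1e.
- by rewrite mule_ge0 ?lee_fin ?ler0n ?col_payoff_ge0.
- by rewrite /pure => ->; rewrite mul0e.
Qed.

Lemma pimix_ge_col p q m : Delta p -> Delta q -> 0 <= m ->
  guarantees p m -> (m%:E <= pimix pi p q)%E.
Proof.
move=> Dp Dq m0 hm; rewrite pimix_colE //.
apply: (@le_trans _ _ (\esum_(t in [set: T]) (m%:E * (q t)%:E))%E).
  by rewrite ge0_esumZl // => [|t]; rewrite ?(Delta_esum Dq) ?mule1 // lee_fin (Delta_ge0 Dq).
apply: le_esum => t _; rewrite muleC.
by apply: lee_pmul; rewrite ?lee_fin ?(Delta_ge0 Dq) ?hm.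
Qed.

Lemma pimix_le_row p q m : Delta p -> Delta q -> 0 <= m ->
  (forall s, (row_payoff q s <= m%:E)%E) -> (pimix pi p q <= m%:E)%E.
Proof.
move=> Dp Dq m0 hm; rewrite pimix_rowE //.
apply: (@le_trans _ _ (\esum_(s in [set: S]) (m%:E * (p s)%:E))%E).
  apply: le_esum => s _; rewrite muleC.
  by apply: lee_pmul; rewrite ?lee_fin ?(Delta_ge0 Dp) ?row_payoff_ge0 ?hm.
by rewrite ge0_esumZl // => [|s]; rewrite ?(Delta_esum Dp) ?mule1 // lee_fin (Delta_ge0 Dp).
Qed.

End Payoffs.

(** * Ultrafilter limits and limit columns *)

Section UltraLimits.
Context {I : Type} (U : set_system I) {UU : UltraFilter U}.

Lemma ultra_fmap {J : Type} (f : I -> J) : UltraFilter (f @ U).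
Proof.
split=> [|G GF fUG]; first exact: fmap_proper_filter.
apply/seteqP; split=> [A GA|]; last exact: fUG.
have [//|UnA] := in_ultra_setVsetC (f @^-1` A) UU.
have /fUG GnA : (f @ U) (~` A) by [].
by have [x []] := @filter_ex _ G GF _ (filterI GA GnA).
Qed.

Lemma cvg_ultra_itv {R : realType} (x : I -> R) (a b : R) :
  (forall i, a <= x i <= b) -> cvg (x @ U).
Proof.
move=> xab; have := @segment_compact R a b; rewrite compact_ultra.
move=> /(_ _ (ultra_fmap x)) [|l [_ xl]]; last by apply/cvg_ex; exists l.
suff : U (x @^-1` `[a, b]) by [].
by apply: filterE => i; rewrite /= in_itv /= xab.
Qed.

End UltraLimits.

Lemma cvg_sum {T : Type} (F : set_system T) {FF : Filter F}
    {K : numFieldType} {V : normedModType K} n (x : nat -> T -> V) (l : nat -> V) :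
  (forall j, x j @ F --> l j) -> \sum_(j < n) x j t @[t --> F] --> \sum_(j < n) l j.
Proof. by move=> xl; apply: cvg_big => //; exact: add_continuous. Qed.

(* A chain that does not stabilise has a strictly increasing subsequence,
   found by repeatedly jumping to a set not contained in the current one. *)
Lemma ascending_union_closed_nondecr (X : Type) (F : set (set X)) :
  ascending_union_closed F -> forall A : nat -> set X,
  (forall i, F (A i)) -> (forall i, A i `<=` A i.+1) -> F (\bigcup_i A i).
Proof.
move=> auc A FA Ainc.
have mono i j : (i <= j)%N -> A i `<=` A j.
  by move=> /subnK <-; elim: (j - i)%N => // d IH; exact: subset_trans IH (Ainc _).
have [[i0 top]|unbounded] := pselect (exists i0, forall j, A j `<=` A i0).
  suff -> : \bigcup_i A i = A i0 by [].
  by apply/seteqP; split=> [x [j _ /top]|x Ax] //; exists i0.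
have jump i : {j | ~ (A j `<=` A i)}.
  apply: cid; apply: contrapT => h; apply: unbounded; exists i => j.
  by apply: contrapT => hj; apply: h; exists j.
have jump_gt i : (i < sval (jump i))%N.
  by rewrite ltnNge; apply/negP => /mono; exact: (svalP (jump i)).
pose h n := iter n (fun i => sval (jump i)) 0%N.
have h_ge n : (n <= h n)%N by elim: n => // n IH; exact: leq_ltn_trans IH (jump_gt _).
have -> : \bigcup_i A i = \bigcup_i A (h i).
  apply/seteqP; split=> x [j _ Ajx]; last by exists (h j).
  by exists j => //; exact: mono (h_ge j) _ Ajx.
apply: auc => // i; split; first exact/mono/ltnW/jump_gt.
exact: (svalP (jump (h i))).
Qed.

Section LimitColumn.
Variables (S T : Type) (pi : S -> T -> bool) (e : nat -> S) (ie : S -> nat).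
Hypothesis ieK : cancel ie e.
Hypothesis auc : ascending_union_closed (B2down pi).
Context {I : Type} (U : set_system I) {UU : UltraFilter U}.

(* The rows lost by [t n] for [U]-almost all [n] form an increasing union of
   finite sets each contained in some [B_t], hence lie in a single [B_ts]. *)
Lemma ultra_limit_column (t : I -> T) :
  exists ts, forall s, pi s ts -> \forall n \near U, pi s (t n).
Proof.
pose lost s := \forall n \near U, ~~ pi s (t n).
pose C k := [set s | (ie s < k)%N /\ lost s].
have BC k : B2down pi (C k).
  have : \forall n \near U, forall i : 'I_k, lost (e i) -> ~~ pi (e i) (t n).
    apply: filter_forall => i; have [Li|nLi] := pselect (lost (e i)).
      by apply: filterS Li => n ? _.
    by apply: filterE => n /nLi.
  move=> /filter_ex [n hn]; exists (t n) => s [sk Ls]; apply/negbTE.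
  by have := hn (Ordinal sk); rewrite /= ieK; apply.
have [ts hts] : B2down pi (\bigcup_k C k).
  apply: ascending_union_closed_nondecr => // k s [sk Ls].
  by split=> //; exact: ltnW.
exists ts => s pis; have [//|] := in_ultra_setVsetC [set n | pi s (t n)] UU.
move=> Lnot; have : (\bigcup_k C k) s.
  by exists (ie s).+1 => //; split=> //; apply: filterS Lnot => n /negP.
by move/hts; rewrite /Bt /= pis.
Qed.

Lemma ultra_limit_column_prefix (t : I -> T) : exists ts, forall k,
  \forall n \near U, forall i : 'I_k, pi (e i) ts -> pi (e i) (t n).
Proof.
have [ts hts] := ultra_limit_column t; exists ts => k; apply: filter_forall => i.
by have [/hts|_] := boolP (pi (e i) ts); [apply: filterS => n ? _|apply: filterE].
Qed.

End LimitColumn.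

(** * Best responses *)

Section BestResponse.
Variables (R : realType) (S T : choiceType) (pi : S -> T -> bool).
Variables (e : nat -> S) (ie : S -> nat).
Hypotheses (eK : cancel e ie) (ieK : cancel ie e).
Hypothesis auc : ascending_union_closed (B2down pi).

Lemma col_payoff_nat (p : S -> R) t :
  col_payoff pi p t = \esum_(i in [set: nat]) (p (e i) * (pi (e i) t)%:R)%:E.
Proof. by apply: esum_reindex_nat; exists ie. Qed.

(* Along a minimising sequence [t n], the ultrafilter limit column is no worse
   on every finite set of rows, hence on all rows. *)
Lemma best_response_exists (t0 : T) (p : S -> R) : Delta p ->
  exists ts, forall t, (col_payoff pi p ts <= col_payoff pi p t)%E.
Proof.
move=> Dp; have p0 := Delta_ge0 Dp.
have [U [UU ooU]] := ultraFilterLemma (@eventually_filter).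
set I := ereal_inf (range (col_payoff pi p)).
have fI : I \is a fin_num.
  rewrite ge0_fin_numE; last by apply/ereal_infP => _ [t _ <-]; exact: col_payoff_ge0.
  apply: (le_lt_trans _ (ltry 1%R)); apply: le_trans (col_payoff_le1 pi t0 Dp).
  by apply: ereal_inf_lbound; exists t0.
have /choice[t tI] : forall n : nat, exists tn,
    (col_payoff pi p tn < I + (n.+1%:R^-1)%:E)%E.
  move=> n; have n_gt0 : (0 : R) < n.+1%:R^-1 by rewrite invr_gt0.
  by have [_ [tn _ <-]] := lb_ereal_inf_adherent n_gt0 fI; exists tn.
have [ts hts] := ultra_limit_column_prefix ieK auc (U := U) t.
exists ts; suff tsI : (col_payoff pi p ts <= I)%E.
  by move=> t'; apply: le_trans tsI _; apply: ereal_inf_lbound; exists t'.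
apply/lee_addgt0Pr => eps eps0; have [k] := ltr_add_invr eps0; rewrite add0r => hk.
rewrite col_payoff_nat; apply: esum_nat_le => [i|K]; first by rewrite lee_fin mulr_ge0.
have [n [tsn kn]] := filter_ex (filterI (hts K) (ooU _ (nbhs_infty_ge k))).
apply: le_trans (_ : _ <= col_payoff pi p (t n))%E _.
  rewrite col_payoff_nat; apply: le_trans (lee_sum_esum_nat K _) => [|i]; last first.
    by rewrite lee_fin mulr_ge0.
  apply: lee_sum => i _; rewrite lee_fin ler_wpM2l // ler_nat.
  by have := tsn i; case: (pi _ ts) => // ->.
apply: le_trans (ltW (tI n)) _; rewrite leeD2l // lee_fin.
by apply: le_trans (ltW hk); rewrite lef_pV2 ?posrE // ler_nat ltnS.
Qed.
Lemma pimix_inf_attained (t0 : T) (p : S -> R) : Delta p ->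
  exists2 q0 : T -> R, Delta q0 &
    pimix pi p q0 = ereal_inf [set pimix pi p q | q in @Delta R T].
Proof.
move=> Dp; have [ts hts] := best_response_exists t0 Dp.
exists (pure R ts); first exact: Delta_pure.
rewrite pimix_pure //; apply/le_anti/andP; split; last first.
  by apply: ereal_inf_lbound; exists (pure R ts); rewrite ?pimix_pure //; exact: Delta_pure.
apply/ereal_infP => _ [q Dq <-]; have fin := col_payoff_fin_num pi ts Dp.
rewrite -(fineK fin); apply: pimix_ge_col => // [|t]; last by rewrite fineK.
by rewrite -lee_fin fineK ?col_payoff_ge0.
Qed.

End BestResponse.

(** * From finitely to countably additive column strategies *)

Definition additive_prob (R : numDomainType) (T : Type) (mu : (T -> bool) -> R) :=
  [/\ forall P, 0 <= mu P, mu xpredT = 1 &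
      forall P Q, mu P = mu (fun t => P t && Q t) + mu (fun t => P t && ~~ Q t)].

Section AdditiveProbability.
Variables (R : realFieldType) (T : Type) (mu : (T -> bool) -> R).
Hypothesis muP : additive_prob mu.
Implicit Types P Q : T -> bool.

Lemma mu_ge0 P : 0 <= mu P. Proof. by case: muP. Qed.

Lemma muT : mu xpredT = 1. Proof. by case: muP. Qed.

Lemma mu_split P Q : mu P = mu (fun t => P t && Q t) + mu (fun t => P t && ~~ Q t).
Proof. by case: muP. Qed.

Lemma eq_mu P Q : P =1 Q -> mu P = mu Q.
Proof. by move=> /funext ->. Qed.

Lemma muD P Q : (forall t, P t -> Q t) ->
  mu (fun t => Q t && ~~ P t) = mu Q - mu P.
Proof.
move=> PQ; rewrite (mu_split Q P) (@eq_mu (fun t => Q t && P t) P); first by ring.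
by move=> t; case: (boolP (P t)) => [/PQ ->|]; rewrite ?andbF.
Qed.

Lemma le_mu P Q : (forall t, P t -> Q t) -> mu P <= mu Q.
Proof. by move=> /muD; rewrite -subr_ge0 => <-; exact: mu_ge0. Qed.

Lemma mu_le1 P : mu P <= 1.
Proof. by rewrite -muT; exact: le_mu. Qed.

Lemma mu_pred0 : mu xpred0 = 0.
Proof. by have := mu_split xpred0 xpred0; rewrite /= -/xpred0; lra. Qed.

Lemma mu_gt0_exists P : 0 < mu P -> exists t, P t.
Proof.
move=> muP_gt0; apply: contrapT => noP; move: muP_gt0.
by rewrite (@eq_mu P xpred0) ?mu_pred0 ?ltxx // => t; apply/negP => Pt; apply: noP; exists t.
Qed.

Lemma mu_andb_const P (b : bool) : mu (fun t => P t && b) = b%:R * mu P.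
Proof.
by case: b; rewrite ?mul1r ?mul0r -?mu_pred0; apply: eq_mu => t; rewrite ?andbT ?andbF.
Qed.

Lemma muU_le P Q : mu (fun t => P t || Q t) <= mu P + mu Q.
Proof.
rewrite (mu_split _ P) (@eq_mu (fun t => (P t || Q t) && P t) P); last first.
  by move=> t; case: (P t); rewrite ?andbF.
by rewrite lerD2l; apply: le_mu => t; case: (P t); rewrite ?andbT.
Qed.

Lemma mu_bigor_le n (X : 'I_n -> T -> bool) :
  mu (fun t => [exists i, X i t]) <= \sum_i mu (X i).
Proof.
elim: n X => [|n IH] X.
  by rewrite big_ord0 -mu_pred0 le_mu // => t /existsP[[]].
rewrite big_ord_recr /=; apply: le_trans (_ : _ <= mu (fun t =>
  [exists i : 'I_n, X (widen_ord (leqnSn n) i) t] || X ord_max t)) _.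
  apply: le_mu => t /existsP[i Xi]; have [ilt|ige] := ltnP i n.
    by apply/orP; left; apply/existsP; exists (Ordinal ilt); congr X: Xi; exact: val_inj.
  apply/orP; right; congr X: Xi; apply: val_inj => /=.
  by apply/eqP; rewrite eqn_leq ige -ltnS ltn_ord.
by apply: le_trans (muU_le _ _) _; rewrite lerD2r; exact: IH.
Qed.

Lemma mu_partition (f : T -> nat) P N :
  \sum_(j < N) mu (fun t => (f t == j) && P t) = mu (fun t => (f t < N)%N && P t).
Proof.
elim: N => [|N IH]; first by rewrite big_ord0 -mu_pred0; apply: eq_mu => t.
rewrite big_ord_recr /= IH [RHS](mu_split _ (fun t => f t < N)%N).
by congr (_ + _); apply: eq_mu => t; rewrite ltnS; case: ltngtP => _ /=; rewrite ?andbF ?andbT.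
Qed.

End AdditiveProbability.

Section CountablyAdditive.
Variables (R : realType) (T : Type) (g : nat -> T) (ig : T -> nat).
Hypothesis igK : cancel ig g.
Variable pe : nat -> T -> bool.
Context (U : set_system nat) {UU : UltraFilter U}.
Hypothesis oo_U : \oo `<=` U.
Hypothesis limit_column : forall t : nat -> T, exists ts, forall k,
  \forall n \near U, forall i : 'I_k, pe i ts -> pe i (t n).
Variable mu : (T -> bool) -> R.
Hypothesis muP : additive_prob mu.
Variable v : R.
Hypothesis mu_pe : forall i, mu (pe i) <= v.

Definition below k u t := [forall i : 'I_k, pe i u ==> pe i t].

Lemma below_exists k t : exists j, below k (g j) t.
Proof. by exists (ig t); apply/forallP => i; rewrite igK implybb. Qed.

Definition first_below k t := ex_minn (below_exists k t).

Lemma first_belowP k t : below k (g (first_below k t)) t.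
Proof. by rewrite /first_below; case: ex_minnP. Qed.

Lemma first_below_min k t j : below k (g j) t -> (first_below k t <= j)%N.
Proof. by rewrite /first_below; case: ex_minnP => m _; apply. Qed.

Lemma first_below_mono k k' t : (k <= k')%N -> (first_below k t <= first_below k' t)%N.
Proof.
move=> kk'; apply: first_below_min; apply/forallP => i.
exact: (forallP (first_belowP k' t) (widen_ord kk' i)).
Qed.

Lemma first_below_row i k t : (i < k)%N -> pe i (g (first_below k t)) -> pe i t.
Proof. by move=> ik; apply/implyP; exact: (forallP (first_belowP k t) (Ordinal ik)). Qed.

Lemma cvg_mu (P : nat -> T -> bool) : cvg ((fun k => mu (P k)) @ U).
Proof. by apply: (cvg_ultra_itv (a := 0) (b := 1)) => k; rewrite mu_ge0 ?mu_le1. Qed.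

(* [weight j] is the [U]-limit, as [k] grows, of the [mu]-probability that
   [g j] is the first column at least as good as [t] against the first [k] rows. *)
Definition weight j := lim ((fun k => mu (fun t => first_below k t == j)) @ U).

Definition mass N := lim ((fun k => mu (fun t => first_below k t < N)%N) @ U).

Lemma weight_ge0 j : 0 <= weight j.
Proof. by apply: limr_ge; [exact: cvg_mu|apply: nearW => k; exact: mu_ge0]. Qed.

Lemma sum_weight N : \sum_(j < N) weight j = mass N.
Proof.
rewrite /mass; have -> : (fun k => mu (fun t => first_below k t < N)%N) =
    (fun k => \sum_(j < N) mu (fun t => first_below k t == j)).
  apply: funext => k; rewrite (@eq_mu _ _ _ _ (fun t => (first_below k t < N)%N && true)).
    by rewrite -mu_partition //; apply: eq_bigr => j _; apply: eq_mu => t; rewrite andbT.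
  by move=> t; rewrite andbT.
apply/esym; apply: cvg_lim => //.
by apply: (cvg_sum (x := fun j k => mu (fun t => first_below k t == j))) => j; exact: cvg_mu.
Qed.

Lemma mass_le k N : mass N <= mu (fun t => first_below k t < N)%N.
Proof.
apply: limr_le; first exact: cvg_mu.
apply: filterS (oo_U (nbhs_infty_ge k)) => k' kk'; apply: le_mu => // t.
by apply: leq_ltn_trans; exact: first_below_mono.
Qed.

Lemma mass_le1 N : mass N <= 1.
Proof. exact: le_trans (mass_le 0 N) (mu_le1 muP _). Qed.

Lemma mass_approx N d : 0 < d -> exists k, mu (fun t => first_below k t < N)%N <= mass N + d.
Proof.
move=> d_gt0; apply: contrapT => far; suff : mass N + d <= mass N by lra.
apply: limr_ge; first exact: cvg_mu.
apply: nearW => k; rewrite leNgt; apply/negP => h; apply: far; exists k; exact: ltW.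
Qed.

Lemma sum_weight_row i N : \sum_(j < N) weight j * (pe i (g j))%:R <= v.
Proof.
apply: (@cvgr_to_le _ U _ _ (fun k =>
  \sum_(j < N) mu (fun t => first_below k t == j) * (pe i (g j))%:R)).
  apply: (cvg_sum (x := fun j k => mu (fun t => first_below k t == j) * (pe i (g j))%:R)
                  (l := fun j => weight j * (pe i (g j))%:R)).
  by move=> j; apply: cvgMr_tmp; exact: cvg_mu.
apply: filterS (oo_U (nbhs_infty_gt i)) => k ik /=.
have -> : \sum_(j < N) mu (fun t => first_below k t == j) * (pe i (g j))%:R =
    mu (fun t => (first_below k t < N)%N && pe i (g (first_below k t))).
  rewrite -mu_partition //; apply: eq_bigr => j _; rewrite mulrC -mu_andb_const //.
  by apply: eq_mu => t; case: eqP => // ->.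
apply: le_trans (mu_pe i); apply: le_mu => // t /andP[_].
exact: first_below_row.
Qed.

Definition escapes (k : nat -> nat) M t := [forall N : 'I_M.+1, (N < first_below (k N) t)%N].

(* With [K] the largest of the [k N], a point escaping past [M] at level [K]
   escapes at every level [k N] unless it is caught between the levels [k N]
   and [K], which happens with probability at most [d N]. *)
Lemma escapes_pos eps (k : nat -> nat) (d : nat -> R) M :
  (forall N, mu (fun t => first_below (k N) t < N.+1)%N <= mass N.+1 + d N) ->
  mass M.+1 <= 1 - eps -> d M + \sum_(N < M.+1) d N < eps ->
  0 < mu (escapes k M).
Proof.
move=> hk massM small; pose K := \max_(N < M.+1) k N.
have kK (N : 'I_M.+1) : (k N <= K)%N by exact: leq_bigmax.
pose X (N : 'I_M.+1) t := (N < first_below K t)%N && (first_below (k N) t < N.+1)%N.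
have muA : eps - d M <= mu (fun t => M < first_below K t)%N.
  rewrite (@eq_mu _ _ _ _ (fun t => xpredT t && ~~ (first_below K t < M.+1)%N)); last first.
    by move=> t; rewrite ltnNge.
  rewrite muD // muT //; have := hk M; have : mu (fun t => first_below K t < M.+1)%N <=
      mu (fun t => first_below (k M) t < M.+1)%N.
    by apply: le_mu => // t; apply: leq_ltn_trans; apply: first_below_mono; exact: (kK ord_max).
  lra.
have muX N : mu (X N) <= d N.
  rewrite (@eq_mu _ _ _ _ (fun t => (first_below (k N) t < N.+1)%N &&
      ~~ (first_below K t < N.+1)%N)); last by move=> t; rewrite /X ltnNge andbC.
  rewrite muD // => [|t]; last by apply: leq_ltn_trans; exact: first_below_mono.
  by have := hk N; have := mass_le K N.+1; lra.
have cover : mu (fun t => M < first_below K t)%N <= mu (escapes k M) + \sum_N mu (X N).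
  apply: le_trans (_ : _ <= mu (fun t => escapes k M t || [exists N, X N t])) _.
    apply: le_mu => // t Mt; case: (boolP (escapes k M t)) => //= /forallPn[N].
    rewrite -leqNgt => hN; apply/existsP; exists N; rewrite /X ltnS hN andbT.
    by apply: leq_ltn_trans Mt; rewrite -ltnS ltn_ord.
  by apply: le_trans (muU_le muP _ _) _; rewrite lerD2l; exact: mu_bigor_le.
have : \sum_N mu (X N) <= \sum_(N < M.+1) d N by apply: ler_sum => N _; exact: muX.
lra.
Qed.

(* If the masses stayed below [1 - eps], the points [t M] escaping past [M]
   would have a limit column [g j], which cannot escape past [j]. *)
Lemma mass_cvg1 eps : 0 < eps -> exists N, 1 - eps < mass N.
Proof.
move=> eps_gt0; apply: contrapT => low.
have massN N : mass N <= 1 - eps by rewrite leNgt; apply/negP => ?; apply: low; exists N.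
pose d := geometric (eps / 8) (2^-1 : R).
have d_gt0 N : 0 < d N by rewrite /d /= mulr_gt0 ?exprn_gt0 ?divr_gt0.
have small M : d M + \sum_(N < M.+1) d N < eps.
  have : \sum_(N < M.+1) d N <= eps / 8 * (1 - 2^-1)^-1.
    by rewrite -(big_mkord xpredT) geometric_le_lim ?ger0_norm ?divr_ge0 ?ltW //; lra.
  have : d M <= eps / 8.
    apply: ler_piMr; [by rewrite divr_ge0 ?ltW|apply: exprn_ile1; lra].
  have -> : eps / 8 * (1 - 2^-1)^-1 = eps / 4 by field.
  lra.
have /choice[k hk] N : exists k, mu (fun t => first_below k t < N.+1)%N <= mass N.+1 + d N.
  exact: mass_approx.
have /choice[t ht] M : exists t, escapes k M t.
  exact: mu_gt0_exists muP _ (escapes_pos hk (massN _) (small M)).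
have [ts hts] := limit_column t.
have [n [tsn jn]] := filter_ex (filterI (hts (k (ig ts))) (oo_U (nbhs_infty_ge (ig ts)))).
have le_j : (first_below (k (ig ts)) (t n) <= ig ts)%N.
  by apply: first_below_min; apply/forallP => i; rewrite igK; apply/implyP; exact: tsn.
by have := forallP (ht n) (Ordinal (jn : ig ts < n.+1)%N); rewrite /= ltnNge le_j.
Qed.

Lemma countably_additive_weights : exists r : nat -> R,
  [/\ forall j, 0 <= r j, forall N, \sum_(j < N) r j <= 1,
      forall eps, 0 < eps -> exists N, 1 - eps < \sum_(j < N) r j &
      forall i N, \sum_(j < N) r j * (pe i (g j))%:R <= v].
Proof.
exists weight; split; [exact: weight_ge0| |move=> eps /mass_cvg1[N]|exact: sum_weight_row].
- by move=> N; rewrite sum_weight mass_le1.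
- by exists N; rewrite sum_weight.
Qed.

End CountablyAdditive.

(** * Optimal column strategies and the minimax equality *)

Section OptimalColumnStrategy.
Variables (R : realType) (S T : choiceType) (pi : S -> T -> bool).
Variables (e : nat -> S) (ie : S -> nat) (g : nat -> T) (ig : T -> nat).
Hypotheses (eK : cancel e ie) (ieK : cancel ie e) (gK : cancel g ig) (igK : cancel ig g).
Hypothesis auc : ascending_union_closed (B2down pi).

Definition lift_rows n (p : 'I_n -> R) (s : S) : R := oapp p 0 (insub (ie s)).

Lemma lift_rows_e n (p : 'I_n -> R) i : lift_rows p (e i) = oapp p 0 (insub i).
Proof. by rewrite /lift_rows eK. Qed.

Lemma esum_lift_rows n (p : 'I_n -> R) (F : S -> R -> R) : (forall s, F s 0 = 0) ->
  (forall s, 0 <= F s (lift_rows p s)) ->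
  \esum_(s in [set: S]) (F s (lift_rows p s))%:E = (\sum_(i < n) F (e i) (p i))%:E.
Proof.
move=> F0 F_ge0; rewrite (@esum_reindex_nat _ _ e); last by exists ie.
rewrite (esum_nat_fin (n := n)) => [|i|i ni].
- by rewrite sumEFin; congr _%:E; apply: eq_bigr => i _; rewrite lift_rows_e valK.
- by rewrite lee_fin.
- by rewrite lift_rows_e insubF ?F0 // ltnNge ni.
Qed.

Lemma lift_rows_ge0 n (p : 'I_n -> R) s : (forall i, 0 <= p i) -> 0 <= lift_rows p s.
Proof. by move=> p0; rewrite /lift_rows; case: insub => /=. Qed.

Lemma Delta_lift_rows n (p : 'I_n -> R) : mixed p -> Delta (lift_rows p).
Proof.
move=> [p0 p1]; split=> [s|]; first exact: lift_rows_ge0.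
by rewrite (@esum_lift_rows n p (fun _ x => x)) ?p1 // => s; exact: lift_rows_ge0.
Qed.

Lemma col_payoff_lift_rows n (p : 'I_n -> R) t : (forall i, 0 <= p i) ->
  col_payoff pi (lift_rows p) t = (\sum_i p i * (pi (e i) t)%:R)%:E.
Proof.
move=> p0; rewrite /col_payoff (@esum_lift_rows n p (fun s x => x * (pi s t)%:R)) // => s.
  by rewrite mul0r.
by rewrite mulr_ge0 ?lift_rows_ge0.
Qed.

(* The game restricted to the first [n] rows has one column per win pattern on
   these rows; [pattern_col n j] realises pattern [j] (it is [g 0] if none does). *)
Definition pattern_col n (j : 'I_#|{ffun 'I_n -> bool}|) : T :=
  xget (g 0) [set t | [ffun i : 'I_n => pi (e i) t] = enum_val j].
Arguments pattern_col : clear implicits.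

Lemma pattern_col_cover n t : exists j, forall i : 'I_n, pi (e i) (pattern_col n j) = pi (e i) t.
Proof.
pose P := [ffun i : 'I_n => pi (e i) t]; exists (enum_rank P) => i.
have := @xgetI _ (g 0) [set t' | [ffun i : 'I_n => pi (e i) t'] = enum_val (enum_rank P)] t.
by rewrite /pattern_col /= enum_rankK => /(_ erefl) /ffunP /(_ i); rewrite !ffunE.
Qed.

Lemma finite_col_strategy v n : 0 <= v ->
  bounds_guarantees pi v ->
  exists2 Q : 'I_#|{ffun 'I_n -> bool}| -> R, mixed Q &
    forall i : 'I_n, \sum_j (pi (e i) (pattern_col n j))%:R * Q j <= v.
Proof.
move=> v0 hv; have N_gt0 : (0 < #|{ffun 'I_n -> bool}|)%N.
  by rewrite card_ffun card_bool expn_gt0.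
case: (minimax_alternative (fun (i : 'I_n) j => (pi (e i) (pattern_col n j))%:R) v N_gt0) => [//|[p mp hp]].
pose m := \big[Num.min/(v + 1)]_j \sum_i p i * (pi (e i) (pattern_col n j))%:R.
have vm : v < m.
  by apply: (big_ind (fun x => v < x)) => [|x y vx vy|j _]; rewrite ?lt_min ?vx ?vy ?ltrDl ?hp.
suff : guarantees pi (lift_rows p) m.
  by move/(hv _ m (Delta_lift_rows mp) (le_trans v0 (ltW vm))); rewrite leNgt vm.
move=> t; rewrite col_payoff_lift_rows ?lee_fin; last by case: mp.
have [j hj] := pattern_col_cover n t; under eq_bigr do rewrite -hj.
by rewrite /m (bigD1 j) //= ge_min lexx.
Qed.

(* [mu] is an ultrafilter limit of the strategies of [finite_col_strategy]. *)
Lemma additive_col_strategy v : 0 <= v ->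
  bounds_guarantees pi v ->
  exists2 mu : (T -> bool) -> R, additive_prob mu & forall i, mu (pi (e i)) <= v.
Proof.
move=> v0 hv; pose Q n := s2val (cid2 (finite_col_strategy n v0 hv)).
have mQ n : mixed (Q n) := s2valP (cid2 (finite_col_strategy n v0 hv)).
have Qv n (i : 'I_n) : \sum_j (pi (e i) (pattern_col n j))%:R * Q n j <= v.
  exact: s2valP' (cid2 (finite_col_strategy n v0 hv)) i.
pose w n (P : T -> bool) := \sum_j Q n j * (P (pattern_col n j))%:R.
have w01 n P : 0 <= w n P <= 1.
  have [Q0 Q1] := mQ n; rewrite sumr_ge0 => [|j _]; last by rewrite mulr_ge0.
  rewrite -Q1 ler_sum // => j _.
  by rewrite ler_piMr ?Q0 // lern1 leq_b1.
have [U [UU ooU]] := ultraFilterLemma (@eventually_filter).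
have cvg_w P : cvg ((fun n => w n P) @ U) by apply: cvg_ultra_itv => n; exact: w01.
exists (fun P => lim ((fun n => w n P) @ U)); first split.
- move=> P; apply: limr_ge => //; apply: nearW => n; by case/andP: (w01 n P).
- rewrite (_ : (fun n => w n xpredT) = fun=> 1) ?lim_cst // funeqE => n.
  by have [_ <-] := mQ n; apply: eq_bigr => j _; rewrite mulr1.
- move=> P P'; rewrite -limD //; congr lim; congr (_ @ U); apply: funext => n.
  rewrite fctE /w -big_split; apply: eq_bigr => j _ /=.
  by case: (P _); case: (P' _); rewrite /= ?mulr0 ?mulr1 ?addr0 ?add0r.
move=> i; apply: limr_le => //; apply: filterS (ooU _ (nbhs_infty_gt i)) => n ni.
by rewrite /w; under eq_bigr do rewrite mulrC; exact: Qv n (Ordinal ni).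
Qed.

Lemma optimal_col_strategy v : 0 <= v ->
  bounds_guarantees pi v ->
  exists2 q0 : T -> R, Delta q0 & forall s, (row_payoff pi q0 s <= v%:E)%E.
Proof.
move=> v0 hv; have [mu muP mu_pe] := additive_col_strategy v0 hv.
have [U [UU ooU]] := ultraFilterLemma (@eventually_filter).
have [r [r0 r1 r_cvg1 r_row]] := countably_additive_weights igK ooU
  (fun t => ultra_limit_column_prefix ieK auc (U := U) t) muP mu_pe.
exists (fun t => r (ig t)); first exact: Delta_enum gK igK r0 r1 r_cvg1.
move=> s; rewrite /row_payoff (@esum_reindex_nat _ _ g); last by exists ig.
under eq_esum do rewrite gK.
apply: esum_nat_le => [j|N]; first by rewrite lee_fin mulr_ge0.
by rewrite sumEFin lee_fin; have := r_row (ie s) N; rewrite ieK.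
Qed.

End OptimalColumnStrategy.

Lemma maxmin_le_minmax (R : realType) (A B : Type) (P : set A) (Q : set B)
    (f : A -> B -> \bar R) :
  (ereal_sup [set ereal_inf [set f a b | b in Q] | a in P] <=
   ereal_inf [set ereal_sup [set f a b | a in P] | b in Q])%E.
Proof.
apply/ereal_infP => _ [b Qb <-]; apply/ereal_supP => _ [a Pa <-].
apply: (@le_trans _ _ (f a b)); first by apply: ereal_inf_lbound; exists b.
by apply: ereal_sup_ubound; exists a.
Qed.

Section MaxMinValue.
Variables (R : realType) (S T : choiceType) (pi : S -> T -> bool) (s0 : S) (t0 : T).

Lemma maxmin_value : exists v : R,
  [/\ ereal_sup [set ereal_inf [set pimix pi p q | q in @Delta R T] | p in @Delta R S]
        = v%:E, 0 <= v & bounds_guarantees pi v].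
Proof.
set V := ereal_sup _.
have V_ge0 : (0 <= V)%E.
  apply: le_trans (ereal_sup_ubound _); last by exists (pure R s0); first exact: Delta_pure.
  apply/ereal_infP => _ [q Dq <-]; apply: pimix_ge0 => //; exact: Delta_pure.
have V_le1 : (V <= 1)%E.
  apply/ereal_supP => _ [p Dp <-]; apply: le_trans (col_payoff_le1 pi t0 Dp).
  rewrite -pimix_pure //; apply: ereal_inf_lbound.
  by exists (pure R t0); first exact: Delta_pure.
have V_fin : V \is a fin_num by rewrite ge0_fin_numE // (le_lt_trans V_le1) ?ltry.
exists (fine V); split=> [||p m Dp m_ge0 pm]; rewrite ?fineK // -lee_fin fineK //.
apply: le_trans (ereal_sup_ubound _); last by exists p.
by apply/ereal_infP => _ [q Dq <-]; exact: pimix_ge_col.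
Qed.

End MaxMinValue.

Theorem theorem2p11 (R : realType) (S T : choiceType) (pi : S -> T -> bool) :
  countably_infinite S -> countably_infinite T ->
  ascending_union_closed (B2down pi) ->
  [/\ (forall p : S -> R, @Delta R S p ->
         exists2 q0 : T -> R, @Delta R T q0 &
           pimix pi p q0 = ereal_inf [set pimix pi p q | q in @Delta R T]),
      (exists2 q0 : T -> R, @Delta R T q0 &
         ereal_sup [set pimix pi p q0 | p in @Delta R S] =
         ereal_inf [set ereal_sup [set pimix pi p q | p in @Delta R S]
                   | q in @Delta R T]) &
      ereal_sup [set ereal_inf [set pimix pi p q | q in @Delta R T]
                | p in @Delta R S] =
      ereal_inf [set ereal_sup [set pimix pi p q | p in @Delta R S]
                | q in @Delta R T]].
Proof.
move=> [e [ie eK ieK]] [g [ig gK igK]] auc.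
have [v [Vv v_ge0 hv]] := maxmin_value R pi (e 0) (g 0).
have [q0 Dq0 q0v] := optimal_col_strategy eK ieK gK igK auc v_ge0 hv.
have VW := maxmin_le_minmax (@Delta R S) (@Delta R T) (pimix pi).
have q0V : (ereal_sup [set pimix pi p q0 | p in @Delta R S] <= v%:E)%E.
  by apply/ereal_supP => _ [p Dp <-]; exact: pimix_le_row.
have Wq0 : (ereal_inf [set ereal_sup [set pimix pi p q | p in @Delta R S] | q in @Delta R T]
    <= ereal_sup [set pimix pi p q0 | p in @Delta R S])%E.
  by apply: ereal_inf_lbound; exists q0.
rewrite Vv in VW; split.
- by move=> p /(pimix_inf_attained eK ieK auc (g 0)).
- by exists q0 => //; apply/le_anti; rewrite Wq0 (le_trans q0V VW).
- by apply/le_anti; rewrite Vv VW (le_trans Wq0 q0V).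
Qed.
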